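(* Let $H_A\cong\mathbb{C}^{d_A}$ and $H_B\cong\mathbb{C}^{d_B}$. Let $\{E^A_{\alpha,k}\}$ ($\alpha=1,\dots,N_A$, $k=1,\dots,M_A$) be an informationally complete $(N_A,M_A)$ POVM on $H_A$ with parameter $x_A$, and $\{E^B_{\beta,j}\}$ ($\beta=1,\dots,N_B$, $j=1,\dots,M_B$) an informationally complete $(N_B,M_B)$ POVM on $H_B$ with parameter $x_B$. Let $\mu,\nu\in\mathbb{R}$ and let $l$ be a positive integer. If a bipartite state $\rho_{AB}$ on $H_A\otimes H_B$ is separable, then $$\left\|\mathcal{M}^l_{\mu,\nu}(\rho_{AB})\right\|_{\mathrm{tr}}\le\sqrt{\left(l\mu^2+\frac{(d_A-1)(d_A^2+M_A^2x_A)}{d_AM_A(M_A-1)}\right)\left(l\nu^2+\frac{(d_B-1)(d_B^2+M_B^2x_B)}{d_BM_B(M_B-1)}\right)}.$$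
   Context: An $(N,M)$ POVM on $\mathbb{C}^d$ (with $M\ge 2$) consists of $N$ POVMs $\{E_{\alpha,k}\mid k=1,\dots,M\}$, $\alpha=1,\dots,N$ (each $E_{\alpha,k}\ge0$ and $\sum_k E_{\alpha,k}=I_d$), satisfying $\mathrm{tr}(E_{\alpha,k})=d/M$, $\mathrm{tr}(E_{\alpha,k}^2)=x$, $\mathrm{tr}(E_{\alpha,k}E_{\alpha,l})=\frac{d-Mx}{M(M-1)}$ for $l\ne k$, and $\mathrm{tr}(E_{\alpha,k}E_{\beta,l})=d/M^2$ for $\beta\neq\alpha$, where the parameter $x$ satisfies $\frac{d}{M^2}<x\le\min\{\frac{d^2}{M^2},\frac dM\}$. It is informationally complete if $N(M-1)=d^2-1$. A state $\rho_{AB}$ is separable if $\rho_{AB}=\sum_ip_i\rho_A^i\otimes\rho_B^i$ with $p_i\ge0$, $\sum_ip_i=1$, and $\rho_A^i,\rho_B^i$ density matrices. Notation: $\rho_A=\mathrm{tr}_B\rho_{AB}$, $\rho_B=\mathrm{tr}_A\rho_{AB}$. $\mathcal{P}(\rho_{AB})$ is the $N_AM_A\times N_BM_B$ real matrix with entry $\mathrm{tr}[(E^A_{\alpha,k}\otimes E^B_{\beta,j})\rho_{AB}]$ in row $(\alpha,k)$ and column $(\beta,j)$ (indices ordered lexicographically). $\tau\in\mathbb{R}^{N_AM_A}$ is the column vector with entries $\mathrm{tr}(E^A_{\alpha,k}\rho_A)$ and $\sigma\in\mathbb{R}^{N_BM_B}$ the column vector with entries $\mathrm{tr}(E^B_{\beta,j}\rho_B)$,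 in the same lexicographic order. $J_{l\times l}$ is the $l\times l$ all-ones matrix, and for a column vector $X$, $\omega_l(X)=(X,\dots,X)$ is the matrix with $l$ columns each equal to $X$. Define the block matrix $$\mathcal{M}^l_{\mu,\nu}(\rho_{AB})=\begin{pmatrix}\mu\nu J_{l\times l}&\mu\,\omega_l(\sigma)^T\\ \nu\,\omega_l(\tau)&\mathcal{P}(\rho_{AB})\end{pmatrix}.$$ $\|G\|_{\mathrm{tr}}=\mathrm{tr}\sqrt{G^\dagger G}$ is the trace norm. *)

(* Complex numbers are R[i] for an arbitrary real closed
   field R (this covers R = the real numbers). *)
From HB Require Import structures.
From mathcomp Require Import all_boot all_order all_algebra.
From mathcomp Require Import spectral.
From mathcomp Require Import complex mxtens.
Set Implicit Arguments.
Unset Strict Implicit.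
Unset Printing Implicit Defensive.
Import Order.TTheory GRing.Theory Num.Theory Num.Def.
Local Open Scope ring_scope.

Section QDefs.
Variable R : rcfType.
Local Notation C := R[i].

Definition rC (x : R) : C := (x%:C)%C.

Definition adjmx m n (A : 'M[C]_(m, n)) : 'M[C]_(n, m) := (map_mx conjC A)^T.

Definition psdmx n (A : 'M[C]_n) : Prop :=
  forall v : 'rV[C]_n, 0 <= (v *m A *m adjmx v) 0 0.

Definition density n (rho : 'M[C]_n) : Prop := psdmx rho /\ \tr rho = 1.

(* The composite space C^dA (x) C^dB is C^(dA*dB), with the lexicographic
   index (i,j) |-> i*dB + j used by mxtens ( *t = Kronecker product). *)
Definition separable dA dB (rho : 'M[C]_(dA * dB)) : Prop :=
  exists (K : nat) (p : 'I_K -> R) (rA : 'I_K -> 'M[C]_dA)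
         (rB : 'I_K -> 'M[C]_dB),
    [/\ forall i, 0 <= p i, \sum_i p i = 1,
        forall i, density (rA i), forall i, density (rB i) &
        rho = \sum_i rC (p i) *: (rA i *t rB i)].

Definition ptrB dA dB (rho : 'M[C]_(dA * dB)) : 'M[C]_dA :=
  \matrix_(i, i') \sum_(j < dB) rho (mxtens_index (i, j)) (mxtens_index (i', j)).
Definition ptrA dA dB (rho : 'M[C]_(dA * dB)) : 'M[C]_dB :=
  \matrix_(j, j') \sum_(i < dA) rho (mxtens_index (i, j)) (mxtens_index (i, j')).

Definition NMPOVM (d N M : nat) (x : R) (E : 'I_N -> 'I_M -> 'M[C]_d) : Prop :=
  [/\ (2 <= M)%N,
      d%:R / (M%:R ^+ 2) < x /\ x <= Num.min (d%:R ^+ 2 / M%:R ^+ 2) (d%:R / M%:R),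
      forall a k, psdmx (E a k) &
  [/\
      forall a, \sum_k E a k = 1%:M,
      forall a k, \tr (E a k) = rC (d%:R / M%:R),
      forall a k, \tr (E a k *m E a k) = rC x,
      forall a k l, k != l ->
        \tr (E a k *m E a l) = rC ((d%:R - M%:R * x) / (M%:R * (M%:R - 1))) &
      forall a b k l, a != b -> \tr (E a k *m E b l) = rC (d%:R / M%:R ^+ 2)]].

Definition IC_NMPOVM (d N M : nat) (x : R) (E : 'I_N -> 'I_M -> 'M[C]_d) : Prop :=
  NMPOVM x E /\ (N * (M - 1) = d ^ 2 - 1)%N.

(* trace norm  ||G||_tr = tr sqrt(G^dagger G) = sum of square roots of the
   eigenvalues of the PSD matrix G^dagger G (spectral_diag gives the
   eigenvalues of a Hermitian matrix). *)
Definition trnorm m n (G : 'M[C]_(m, n)) : C :=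
  \sum_i sqrtC (spectral_diag (adjmx G *m G) 0 i).

(* correlation matrix P(rho), row (alpha,k) <-> index alpha*MA + k *)
Definition Pmat dA dB NA MA NB MB (EA : 'I_NA -> 'I_MA -> 'M[C]_dA)
  (EB : 'I_NB -> 'I_MB -> 'M[C]_dB) (rho : 'M[C]_(dA * dB)) :
  'M[C]_(NA * MA, NB * MB) :=
  \matrix_(r, c) \tr ((EA (mxtens_unindex r).1 (mxtens_unindex r).2
                        *t EB (mxtens_unindex c).1 (mxtens_unindex c).2) *m rho).

Definition probvec d N M (E : 'I_N -> 'I_M -> 'M[C]_d) (s : 'M[C]_d) :
  'cV[C]_(N * M) :=
  \col_r \tr (E (mxtens_unindex r).1 (mxtens_unindex r).2 *m s).

Definition omega (l n : nat) (X : 'cV[C]_n) : 'M[C]_(n, l) := \matrix_(i, j) X i 0.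

Definition Mmat (l : nat) (mu nu : R) dA dB NA MA NB MB
  (EA : 'I_NA -> 'I_MA -> 'M[C]_dA) (EB : 'I_NB -> 'I_MB -> 'M[C]_dB)
  (rho : 'M[C]_(dA * dB)) : 'M[C]_(l + NA * MA, l + NB * MB) :=
  block_mx (rC (mu * nu) *: const_mx 1 : 'M[C]_(l, l))
           (rC mu *: (omega l (probvec EB (ptrA rho)))^T)
           (rC nu *: omega l (probvec EA (ptrB rho)))
           (Pmat EA EB rho).

End QDefs.

From HB Require Import structures.
From mathcomp Require Import all_boot all_order all_algebra.
From mathcomp Require Import spectral complex mxtens sesquilinear.
From mathcomp Require Import ring lra.
Import Order.TTheory GRing.Theory Num.Theory Num.Def.
Set Implicit Arguments.
Unset Strict Implicit.
Local Open Scope ring_scope.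

(* Write frob2 for the squared Frobenius norm.  For a separable state
   rho = sum_i p_i rA_i (x) rB_i, the matrix M^l_{mu,nu}(rho) is the convex
   combination sum_i p_i u_i v_i^T, where u_i stacks l copies of mu on top of
   the probability vector of rA_i, and v_i likewise.  Through the polar
   decomposition G = W |G| and Cauchy-Schwarz for the trace pairing, the trace
   norm of such a combination is at most max_i sqrt(frob2 u_i * frob2 v_i).
   For an (N,M) POVM and a state s, put y_{a,k} = tr(E_{a,k} s) - 1/M; then
   frob2 p = sum |y|^2 + N/M.  With Z = sum conj(y_{a,k}) E_{a,k}, one has
   sum |y|^2 = tr(Z (s - I/d)), the POVM Gram relations give
   frob2 Z = (x - c) sum |y|^2 with c the overlap of two outcomes of the same
   POVM, and purity gives frob2 (s - I/d) <= 1 - 1/d; so Cauchy-Schwarz bounds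
   sum |y|^2 by (x - c)(1 - 1/d).  Informational completeness enters only
   through N = (d^2 - 1)/(M - 1), which turns this into the stated bound. *)

Section Adjoint.
Variable R : rcfType.
Local Notation C := R[i].

Lemma adjmxE m n (A : 'M[C]_(m, n)) i j : adjmx A i j = (A j i)^*.
Proof. by rewrite !mxE. Qed.

Lemma adjmx_trmxC m n (A : 'M[C]_(m, n)) : (A ^t*)%sesqui = adjmx A.
Proof. by apply/matrixP => i j; rewrite !mxE. Qed.

Lemma adjmxK m n (A : 'M[C]_(m, n)) : adjmx (adjmx A) = A.
Proof. by apply/matrixP => i j; rewrite !adjmxE conjCK. Qed.

Lemma adjmxM m n p (A : 'M[C]_(m, n)) (B : 'M[C]_(n, p)) :
  adjmx (A *m B) = adjmx B *m adjmx A.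
Proof.
apply/matrixP => i j; rewrite adjmxE !mxE rmorph_sum; apply: eq_bigr => k _.
by rewrite !mxE rmorphM mulrC.
Qed.

Lemma adjmxD m n (A B : 'M[C]_(m, n)) : adjmx (A + B) = adjmx A + adjmx B.
Proof. by apply/matrixP => i j; rewrite !mxE rmorphD. Qed.

Lemma adjmxB m n (A B : 'M[C]_(m, n)) : adjmx (A - B) = adjmx A - adjmx B.
Proof. by apply/matrixP => i j; rewrite !mxE rmorphB. Qed.

Lemma adjmxZ m n c (A : 'M[C]_(m, n)) : adjmx (c *: A) = c^* *: adjmx A.
Proof. by apply/matrixP => i j; rewrite !mxE rmorphM. Qed.

Lemma adjmx_scalar n (c : C) : adjmx (c%:M : 'M[C]_n) = c^*%:M.
Proof. by apply/matrixP => i j; rewrite !mxE rmorphMn eq_sym. Qed.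

Lemma adjmx_sum m n I (r : seq I) (F : I -> 'M[C]_(m, n)) :
  adjmx (\sum_(i <- r) F i) = \sum_(i <- r) adjmx (F i).
Proof.
apply/matrixP => i j; rewrite adjmxE !summxE rmorph_sum.
by apply: eq_bigr => k _; rewrite !mxE.
Qed.

Lemma adjmx_diag n (d : 'rV[C]_n) : adjmx (diag_mx d) = diag_mx (map_mx conjC d).
Proof. by rewrite /adjmx map_diag_mx tr_diag_mx. Qed.

Lemma conjC_rC (x : R) : (rC x)^* = rC x.
Proof. by apply/CrealP; apply/complex_realP; exists x. Qed.

End Adjoint.

Section Frobenius.
Variable R : rcfType.
Local Notation C := R[i].

Definition frob2 m n (A : 'M[C]_(m, n)) : C := \sum_i \sum_j A i j * (A i j)^*.

Lemma frob2_ge0 m n (A : 'M[C]_(m, n)) : 0 <= frob2 A.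
Proof. by do 2!apply: sumr_ge0 => ? _; apply: mul_conjC_ge0. Qed.

Lemma frob2_trmx m n (A : 'M[C]_(m, n)) : frob2 A^T = frob2 A.
Proof. by rewrite /frob2 exchange_big; do 2!apply: eq_bigr => ? _; rewrite mxE. Qed.

Lemma frob2_adjmx m n (A : 'M[C]_(m, n)) : frob2 (adjmx A) = frob2 A.
Proof.
rewrite /frob2 exchange_big; do 2!apply: eq_bigr => ? _.
by rewrite !adjmxE conjCK mulrC.
Qed.

Lemma mxtrace_adjmxM m n (A : 'M[C]_(m, n)) : \tr (adjmx A *m A) = frob2 A.
Proof.
rewrite /frob2 /mxtrace exchange_big; apply: eq_bigr => j _; rewrite mxE.
by apply: eq_bigr => i _; rewrite adjmxE mulrC.
Qed.

Lemma mxtrace_mul_adjmx m n (A : 'M[C]_(m, n)) : \tr (A *m adjmx A) = frob2 A.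
Proof. by rewrite mxtrace_mulC mxtrace_adjmxM. Qed.

Lemma frob2_cV m (w : 'cV[C]_m) : frob2 w = \sum_i w i 0 * (w i 0)^*.
Proof. by apply: eq_bigr => i _; rewrite big_ord1. Qed.

Lemma frob2_col_mx m1 m2 (u : 'cV[C]_m1) (w : 'cV[C]_m2) :
  frob2 (col_mx u w) = frob2 u + frob2 w.
Proof.
by rewrite !frob2_cV big_split_ord; congr (_ + _); apply: eq_bigr => i _;
  rewrite ?col_mxEu ?col_mxEd.
Qed.

Lemma sum_mxvec_index m n (F : 'I_(m * n) -> C) :
  \sum_k F k = \sum_i \sum_j F (mxvec_index i j).
Proof.
by rewrite pair_bigA (reindex _ (@curry_mxvec_bij _ _)); apply: eq_bigr => -[].
Qed.

Lemma dotmx_mxvec m n (A B : 'M[C]_(m, n)) :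
  dotmx (mxvec A) (mxvec B) = \sum_i \sum_j A i j * (B i j)^*.
Proof.
rewrite dotmxE mxE sum_mxvec_index; do 2!apply: eq_bigr => ? _.
by rewrite !mxE !mxvecE.
Qed.

Lemma mxtrace_mul_cauchy_schwarz m n (X : 'M[C]_(m, n)) (Y : 'M[C]_(n, m)) :
  `|\tr (X *m Y)| ^+ 2 <= frob2 X * frob2 Y.
Proof.
pose u := mxvec X; pose v := mxvec (adjmx Y).
have CS : `|dotmx u v| ^+ 2 <= dotmx u u * dotmx v v.
  exact: (CauchySchwarz (@dotmx C _) u v).1.
rewrite !dotmx_mxvec in CS.
suff -> : \tr (X *m Y) = \sum_i \sum_j X i j * (adjmx Y i j)^*.
  by rewrite -(frob2_adjmx Y).
apply: eq_bigr => i _; rewrite mxE.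
by apply: eq_bigr => j _; rewrite adjmxE conjCK.
Qed.

End Frobenius.

Section Hermitian.
Variable R : rcfType.
Local Notation C := R[i].

Lemma form_delta n (A : 'M[C]_n) (i j : 'I_n) :
  ((delta_mx 0 i : 'rV[C]_n) *m A *m adjmx (delta_mx 0 j : 'rV[C]_n)) 0 0 = A i j.
Proof.
have -> : adjmx (delta_mx 0 j : 'rV[C]_n) = delta_mx j 0.
  by apply/matrixP => a b; rewrite !mxE conjC_nat andbC.
by rewrite -rowE -colE !mxE.
Qed.

Lemma quadform_eq0 n (B : 'M[C]_n) :
  (forall u : 'rV[C]_n, (u *m B *m adjmx u) 0 0 = 0) -> B = 0.
Proof.
move=> qB0; pose f (u w : 'rV[C]_n) := (u *m B *m adjmx w) 0 0.
have cross c i j : c^* * B i j + c * B j i = 0.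
  pose e k : 'rV[C]_n := delta_mx 0 k.
  have expand : f (e i + c *: e j) (e i + c *: e j) =
      f (e i) (e i) + c^* * f (e i) (e j) + c * f (e j) (e i) + c * c^* * f (e j) (e j).
    by rewrite /f adjmxD adjmxZ !mulmxDl !mulmxDr -!scalemxAl -!scalemxAr !mxE; ring.
  have := qB0 (e i + c *: e j); rewrite -/(f _ _) expand /f !qB0 !form_delta.
  by rewrite mulr0 addr0 add0r.
apply/matrixP => i j; rewrite mxE.
have /eqP := cross 1 i j; rewrite conjC1 !mul1r addr_eq0 => /eqP Bji.
have /eqP := cross 'i i j; rewrite Bji conjCi mulrNN -mulrDl mulf_eq0.
by rewrite -mulr2n mulrn_eq0 (negbTE (neq0Ci _)) /= => /eqP ->; rewrite oppr0.
Qed.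

Lemma psdmx_herm n (A : 'M[C]_n) : psdmx A -> adjmx A = A.
Proof.
move=> psdA; apply/eqP; rewrite -subr_eq0; apply/eqP/quadform_eq0 => u.
rewrite mulmxBr mulmxBl.
have -> : u *m adjmx A *m adjmx u = adjmx (u *m A *m adjmx u).
  by rewrite !adjmxM adjmxK mulmxA.
by rewrite [LHS]mxE [in X in _ + X]mxE adjmxE (geC0_conj (psdA u)) subrr.
Qed.

Lemma psdmx_adjmxM m n (G : 'M[C]_(m, n)) : psdmx (adjmx G *m G).
Proof.
move=> v; rewrite mulmxA -mulmxA -{1}[v]adjmxK -adjmxM -trace_mx11.
by rewrite mxtrace_adjmxM frob2_ge0.
Qed.

Lemma spectral_mul_adjmx n (A : 'M[C]_n) : spectralmx A *m adjmx (spectralmx A) = 1%:M.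
Proof. by rewrite -adjmx_trmxC; apply/unitarymxP/spectral_unitarymx. Qed.

Lemma spectral_adjmx_mul n (A : 'M[C]_n) : adjmx (spectralmx A) *m spectralmx A = 1%:M.
Proof.
rewrite -adjmx_trmxC -invmx_unitary ?spectral_unitarymx //.
by rewrite mulVmx // spectral_unit.
Qed.

Section SpectralHermitian.
Variables (n : nat) (A : 'M[C]_n).
Hypothesis A_herm : adjmx A = A.
Local Notation P := (spectralmx A).
Local Notation D := (spectral_diag A).

Lemma spectral_decomposition : A = adjmx P *m diag_mx D *m P.
Proof.
rewrite -adjmx_trmxC -invmx_unitary ?spectral_unitarymx //.
by apply/orthomx_spectralP/normalmxP; rewrite adjmx_trmxC A_herm.
Qed.

Lemma spectral_diagonalization : P *m A *m adjmx P = diag_mx D.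
Proof.
by rewrite [X in P *m X *m _]spectral_decomposition !mulmxA spectral_mul_adjmx mul1mx
  -mulmxA spectral_mul_adjmx mulmx1.
Qed.

Lemma sum_spectral_diag : \sum_j D 0 j = \tr A.
Proof.
by rewrite -mxtrace_diag -spectral_diagonalization mxtrace_mulC mulmxA
  spectral_adjmx_mul mul1mx.
Qed.

Lemma frob2_herm : frob2 A = \sum_j D 0 j ^+ 2.
Proof.
have -> : frob2 A = \tr (adjmx P *m (diag_mx D *m diag_mx D) *m P).
  rewrite -mxtrace_adjmxM A_herm [X in X *m _]spectral_decomposition.
  rewrite [X in _ *m X]spectral_decomposition !mulmxA.
  by rewrite -(mulmxA _ P) spectral_mul_adjmx mulmx1.
rewrite mxtrace_mulC mulmxA spectral_mul_adjmx mul1mx mulmx_diag mxtrace_diag.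
by apply: eq_bigr => j _; rewrite mxE expr2.
Qed.

End SpectralHermitian.

Lemma psdmx_spectral_diag_ge0 n (A : 'M[C]_n) j :
  psdmx A -> 0 <= spectral_diag A 0 j.
Proof.
move=> psdA; set P := spectralmx A.
have -> : spectral_diag A 0 j = diag_mx (spectral_diag A) j j.
  by rewrite mxE eqxx mulr1n.
rewrite -(spectral_diagonalization (psdmx_herm psdA)) -form_delta -/P.
by rewrite !mulmxA -mulmxA -(mulmxA _ P) -adjmxM mulmxA; apply: psdA.
Qed.

Lemma density_frob2_le1 n (s : 'M[C]_n) : density s -> frob2 s <= 1.
Proof.
move=> [psds tr1]; have s_herm := psdmx_herm psds.
set D := spectral_diag s; have D_ge0 j : 0 <= D 0 j by exact: psdmx_spectral_diag_ge0.
rewrite frob2_herm // -(expr1n C 2) -tr1 -sum_spectral_diag // expr2 mulr_suml.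
apply: ler_sum => j _; rewrite expr2 mulr_sumr (bigD1 j) //= lerDl.
by apply: sumr_ge0 => k _; apply: mulr_ge0.
Qed.

Lemma frob2_density_centered n (s : 'M[C]_n) :
  density s -> frob2 (s - (n%:R^-1)%:M) <= 1 - n%:R^-1.
Proof.
move=> [psds trs]; have s_herm := psdmx_herm psds.
set c : C := n%:R^-1.
have c_real : c^* = c by rewrite fmorphV /= conjC_nat.
have ccn : c * c *+ n = c.
  rewrite /c -mulr_natr -mulrA; have [->|n0] := posnP n; first by rewrite invr0 mul0r.
  by rewrite mulVf ?mulr1 // pnatr_eq0 -lt0n.
have trss : \tr (s *m s) = frob2 s by rewrite -mxtrace_adjmxM s_herm.
rewrite -mxtrace_adjmxM adjmxB s_herm adjmx_scalar c_real mulmxBl !mulmxBr.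
rewrite mul_mx_scalar mul_scalar_mx -scalar_mxM !linearB /= !mxtraceZ.
rewrite mxtrace_scalar trs trss ccn mulr1 subrr addr0 lerD2r.
exact: density_frob2_le1.
Qed.

End Hermitian.

Section TraceNorm.
Variable R : rcfType.
Local Notation C := R[i].

Lemma frob2_mul_adjmx_isometry m n p (X : 'M[C]_(m, n)) (V : 'M[C]_(p, n)) :
  adjmx V *m V = 1%:M -> frob2 (X *m adjmx V) = frob2 X.
Proof.
move=> isoV; rewrite -mxtrace_mul_adjmx adjmxM adjmxK -mulmxA (mulmxA _ V) isoV.
by rewrite mul1mx mxtrace_mul_adjmx.
Qed.

Lemma frob2_adjmx_mul_le m n p (W : 'M[C]_(m, n)) (w : 'M[C]_(m, p)) :
  W *m adjmx W *m (W *m adjmx W) = W *m adjmx W ->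
  frob2 (adjmx W *m w) <= frob2 w.
Proof.
set Q := W *m adjmx W => idemQ.
have hermQ : adjmx Q = Q by rewrite adjmxM adjmxK.
have idemQ' : (1%:M - Q) *m (1%:M - Q) = 1%:M - Q.
  by rewrite mulmxBl mul1mx mulmxBr mulmx1 idemQ subrr subr0.
rewrite -subr_ge0 -!mxtrace_adjmxM adjmxM adjmxK mulmxA -(mulmxA _ W) -/Q.
have -> : \tr (adjmx w *m w) - \tr (adjmx w *m Q *m w)
          = \tr (adjmx ((1%:M - Q) *m w) *m ((1%:M - Q) *m w)).
  rewrite [in RHS]adjmxM adjmxB adjmx_scalar conjC1 hermQ [in RHS]mulmxA.
  rewrite -[in RHS](mulmxA (adjmx w)) idemQ'.
  by rewrite mulmxBr mulmx1 mulmxBl -linearB.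
by rewrite mxtrace_adjmxM frob2_ge0.
Qed.

Lemma trnorm_ge0 m n (G : 'M[C]_(m, n)) : 0 <= trnorm G.
Proof.
apply: sumr_ge0 => j _; rewrite sqrtC_ge0.
exact/psdmx_spectral_diag_ge0/psdmx_adjmxM.
Qed.

(* W = G P^* diag(s^-1), where s are the singular values of G and P
   diagonalises G^* G, is the partial isometry of the polar decomposition;
   [0^-1 = 0] makes it vanish on the kernel of G. *)
Lemma trnorm_polar m n (G : 'M[C]_(m, n)) :
  exists (W : 'M[C]_(m, n)) (V : 'M[C]_n),
  [/\ trnorm G = \tr (adjmx W *m G *m adjmx V),
      W *m adjmx W *m (W *m adjmx W) = W *m adjmx W &
      adjmx V *m V = 1%:M].
Proof.
set H := adjmx G *m G; set P := spectralmx H; set D := spectral_diag H.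
pose s j := sqrtC (D 0 j); pose sV := \row_j (s j)^-1.
have D_sqr j : D 0 j = s j ^+ 2 by rewrite sqrtCK.
have Y_gram : adjmx (G *m adjmx P) *m (G *m adjmx P) = diag_mx D.
  by rewrite -spectral_diagonalization ?adjmxM ?adjmxK ?mulmxA.
have sV_herm : adjmx (diag_mx sV) = diag_mx sV.
  rewrite adjmx_diag; congr diag_mx; apply/matrixP => i j.
  rewrite !mxE geC0_conj // invr_ge0 sqrtC_ge0.
  exact/psdmx_spectral_diag_ge0/psdmx_adjmxM.
have gram_polar : adjmx (G *m adjmx P *m diag_mx sV) *m G *m adjmx P
                  = diag_mx sV *m diag_mx D.
  by rewrite adjmxM sV_herm -Y_gram !mulmxA.
exists (G *m adjmx P *m diag_mx sV), P; split; last exact: spectral_adjmx_mul.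
  rewrite gram_polar mulmx_diag mxtrace_diag; apply: eq_bigr => j _.
  rewrite !mxE -/(s j) D_sqr.
  have [->|s0] := eqVneq (s j) 0; first by rewrite invr0 mul0r.
  by field.
set W := G *m adjmx P *m diag_mx sV.
have W_gram : adjmx W *m W = diag_mx sV *m diag_mx D *m diag_mx sV.
  by rewrite {2}/W !mulmxA gram_polar.
have -> : W *m adjmx W *m (W *m adjmx W) = W *m (adjmx W *m W) *m adjmx W.
  by rewrite !mulmxA.
rewrite W_gram !mulmx_diag; congr (_ *m _).
rewrite /W -mulmxA mulmx_diag; congr (_ *m diag_mx _); apply/rowP => j.
rewrite !mxE D_sqr; have [->|s0] := eqVneq (s j) 0; first by rewrite invr0 !mul0r.
by field.
Qed.

Lemma trnorm_le_convex_rank1 m n K (G : 'M[C]_(m, n)) (p : 'I_K -> C)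
    (u : 'I_K -> 'cV[C]_m) (v : 'I_K -> 'cV[C]_n) (c : C) :
  (forall i, 0 <= p i) -> \sum_i p i = 1 -> 0 <= c ->
  (forall i, frob2 (u i) * frob2 (v i) <= c ^+ 2) ->
  G = \sum_i p i *: (u i *m (v i)^T) -> trnorm G <= c.
Proof.
move=> p_ge0 p_sum1 c_ge0 uv_le {G}->; set G := \sum_i _.
have [W [V [trG idemW isoV]]] := trnorm_polar G.
have term_le i : `|\tr ((v i)^T *m adjmx V *m (adjmx W *m u i))| <= c.
  rewrite -(ler_pXn2r (n := 2)) ?nnegrE //.
  apply: le_trans (mxtrace_mul_cauchy_schwarz _ _) _.
  rewrite frob2_mul_adjmx_isometry // frob2_trmx mulrC; apply: le_trans (uv_le i).
  by apply: ler_wpM2r; [exact: frob2_ge0 | exact: frob2_adjmx_mul_le].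
have trG_sum : trnorm G = \sum_i p i * \tr ((v i)^T *m adjmx V *m (adjmx W *m u i)).
  rewrite trG mulmx_sumr mulmx_suml linear_sum; apply: eq_bigr => i _.
  rewrite -scalemxAr -scalemxAl linearZ /=; congr (_ * _).
  by rewrite [RHS]mxtrace_mulC !mulmxA.
rewrite -(ger0_norm (trnorm_ge0 G)) trG_sum.
apply: le_trans (ler_norm_sum _ _ _) _; rewrite -[c]mul1r -p_sum1 mulr_suml.
by apply: ler_sum => i _; rewrite normrM ger0_norm ?ler_wpM2l.
Qed.

End TraceNorm.

Section POVMBound.
Variable R : rcfType.
Local Notation C := R[i].

Lemma sum_mxtens_unindex m n (F : 'I_m -> 'I_n -> C) :
  \sum_(r < m * n) F (mxtens_unindex r).1 (mxtens_unindex r).2 = \sum_a \sum_k F a k.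
Proof.
rewrite pair_bigA (reindex (@mxtens_index m n)); last first.
  exists (@mxtens_unindex m n) => r _.
    exact: mxtens_indexK.
  exact: mxtens_unindexK.
by apply: eq_bigr => -[a k] _; rewrite mxtens_indexK.
Qed.

Variables (d N M : nat) (x : R) (E : 'I_N -> 'I_M -> 'M[C]_d).
Hypothesis povmE : NMPOVM x E.

Let overlap : R := (d%:R - M%:R * x) / (M%:R * (M%:R - 1)).

Lemma NMPOVM_dim_gt0 : (0 < d)%N.
Proof.
case: povmE => _ [x_gt x_le] _ _; rewrite lt0n; apply/negP => /eqP d0.
move: x_gt x_le; rewrite d0 !mul0r expr0n /= mul0r le_min => x_gt /andP[x_le _].
by move: (lt_le_trans x_gt x_le); rewrite ltxx.
Qed.

Lemma NMPOVM_overlap_le : overlap <= x.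
Proof.
case: povmE => M_ge2 [x_gt _] _ _.
have M_gt1 : (1 : R) < M%:R by rewrite ltr1n.
have MM_gt0 : (0 : R) < M%:R * (M%:R - 1) by apply: mulr_gt0; lra.
rewrite ler_pdivrMr // ; rewrite ltr_pdivrMr in x_gt; last by apply: exprn_gt0; lra.
nra.
Qed.

Variable s : 'M[C]_d.
Hypothesis s_density : density s.

Let dev a k := \tr (E a k *m s) - M%:R^-1.
Let S := \sum_a \sum_k dev a k * (dev a k)^*.
Let Z := \sum_a \sum_k (dev a k)^* *: E a k.

Lemma sum_dev a : \sum_k dev a k = 0.
Proof.
case: povmE => M_ge2 _ _ [sumE _ _ _ _]; case: s_density => _ trs.
rewrite sumrB sumr_const card_ord -linear_sum -mulmx_suml sumE mul1mx /= trs.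
by rewrite -[_^-1 *+ M]mulr_natr mulVf ?subrr // pnatr_eq0 -lt0n ltnW.
Qed.

Lemma frob2_probvec_dev : frob2 (probvec E s) = S + N%:R / M%:R.
Proof.
case: povmE => M_ge2 _ _ _.
have M0 : (M%:R : C) != 0 by rewrite pnatr_eq0 -lt0n ltnW.
have Minv_real : (M%:R^-1 : C)^* = M%:R^-1 by rewrite fmorphV /= conjC_nat.
pose T a k := \tr (E a k *m s) * (\tr (E a k *m s))^*.
rewrite frob2_cV (eq_bigr (fun r => T (mxtens_unindex r).1 (mxtens_unindex r).2));
  last by move=> r _; rewrite mxE.
rewrite sum_mxtens_unindex /S.
have -> : N%:R / M%:R = \sum_(a < N) (M%:R^-1 : C).
  by rewrite sumr_const card_ord mulr_natl.
rewrite -big_split /=.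
apply: eq_bigr => a _.
have -> : \sum_k T a k =
    \sum_k (dev a k * (dev a k)^* + M%:R^-1 * dev a k + M%:R^-1 * (dev a k)^*
            + M%:R^-1 * M%:R^-1).
  by apply: eq_bigr => k _; rewrite /T /dev rmorphB /= Minv_real; ring.
rewrite !big_split /= -!mulr_sumr -rmorph_sum /= sum_dev rmorph0 !mulr0 !addr0.
by rewrite sumr_const card_ord -(mulr_natr (M%:R^-1) M) mulVf ?mulr1.
Qed.

Lemma gram_dev a k :
  \sum_b \sum_l (dev b l)^* * \tr (E a k *m E b l) = rC (x - overlap) * (dev a k)^*.
Proof.
case: povmE => _ _ _ [_ _ trEE trEEkl trEEab].
have sum_devC b : \sum_l (dev b l)^* = 0 by rewrite -rmorph_sum sum_dev rmorph0.
rewrite (bigD1 a) //= [X in _ + X]big1 ?addr0; last first.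
  move=> b ba; rewrite (eq_bigr (fun l => (dev b l)^* * rC (d%:R / M%:R ^+ 2))).
    by rewrite -mulr_suml sum_devC mul0r.
  by move=> l _; rewrite trEEab // eq_sym.
rewrite (bigD1 k) //= trEE (eq_bigr (fun l => (dev a l)^* * rC overlap)); last first.
  by move=> l lk; rewrite trEEkl // eq_sym.
have /eqP := sum_devC a; rewrite (bigD1 k) //= addr_eq0 -mulr_suml => /eqP ->.
by rewrite /rC rmorphB /=; ring.
Qed.

Lemma frob2_dev_comb : frob2 Z = rC (x - overlap) * S.
Proof.
case: povmE => _ _ psdE _.
have Z_adj : adjmx Z = \sum_a \sum_k dev a k *: E a k.
  rewrite adjmx_sum; apply: eq_bigr => a _; rewrite adjmx_sum.
  by apply: eq_bigr => k _; rewrite adjmxZ conjCK psdmx_herm.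
rewrite -mxtrace_adjmxM Z_adj mulmx_suml linear_sum /S mulr_sumr.
apply: eq_bigr => a _; rewrite mulmx_suml linear_sum mulr_sumr.
apply: eq_bigr => k _; rewrite -scalemxAl linearZ /= [RHS]mulrCA -gram_dev.
congr (_ * _); rewrite mulmx_sumr linear_sum; apply: eq_bigr => b _.
by rewrite mulmx_sumr linear_sum; apply: eq_bigr => l _; rewrite -scalemxAr linearZ.
Qed.

Lemma mxtrace_dev_comb : \tr (Z *m (s - (d%:R^-1)%:M)) = S.
Proof.
case: povmE => _ _ _ [_ trE _ _ _].
have d0 : (d%:R : C) != 0 by rewrite pnatr_eq0 -lt0n NMPOVM_dim_gt0.
rewrite mulmx_suml linear_sum; apply: eq_bigr => a _.
rewrite mulmx_suml linear_sum; apply: eq_bigr => k _.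
rewrite -scalemxAl linearZ /= mulrC mulmxBr linearB /= mul_mx_scalar linearZ /= trE.
by rewrite /rC rmorphM fmorphV /= !rmorph_nat mulKf.
Qed.

Lemma dev_sum_le : S <= rC (x - overlap) * (1 - d%:R^-1).
Proof.
have S_ge0 : 0 <= S by do 2!apply: sumr_ge0 => ? _; apply: mul_conjC_ge0.
have xc_ge0 : 0 <= rC (x - overlap) by rewrite /rC ler0c subr_ge0 NMPOVM_overlap_le.
have d_ge1 : (1 : C) <= d%:R by rewrite ler1n NMPOVM_dim_gt0.
have K_ge0 : 0 <= rC (x - overlap) * (1 - d%:R^-1).
  by rewrite mulr_ge0 // subr_ge0 invf_le1 // (lt_le_trans ltr01).
have SS_le : S * S <= S * (rC (x - overlap) * (1 - d%:R^-1)).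
  have := mxtrace_mul_cauchy_schwarz Z (s - (d%:R^-1)%:M).
  rewrite mxtrace_dev_comb ger0_norm // frob2_dev_comb expr2 => /le_trans; apply.
  rewrite -mulrA mulrCA; apply/ler_wpM2l/ler_wpM2l => //.
  exact: frob2_density_centered.
have [->|S_neq0] := eqVneq S 0; first by [].
by rewrite -(ler_pM2l (x := S)) // lt_def S_neq0 S_ge0.
Qed.

Lemma frob2_probvec_le : (N * (M - 1) = d ^ 2 - 1)%N ->
  frob2 (probvec E s) <=
  rC ((d%:R - 1) * (d%:R ^+ 2 + M%:R ^+ 2 * x) / (d%:R * M%:R * (M%:R - 1))).
Proof.
move=> IC; case: povmE => M_ge2 _ _ _; have d_gt0 := NMPOVM_dim_gt0.
have d0 : (d%:R : R) != 0 by rewrite pnatr_eq0 -lt0n.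
have M0 : (M%:R : R) != 0 by rewrite pnatr_eq0 -lt0n ltnW.
have M1 : (M%:R - 1 : R) != 0 by rewrite subr_eq0 pnatr_eq1 gtn_eqF.
have N_eq : (N%:R : R) = (d%:R ^+ 2 - 1) / (M%:R - 1).
  apply: (mulIf M1); rewrite divfK //.
  have := congr1 (fun n => n%:R : R) IC.
  by rewrite /= natrM !natrB ?(ltnW M_ge2) ?expn_gt0 ?d_gt0 // natrX.
have -> : (d%:R - 1) * (d%:R ^+ 2 + M%:R ^+ 2 * x) / (d%:R * M%:R * (M%:R - 1))
          = (x - overlap) * (1 - d%:R^-1) + N%:R / M%:R.
  by rewrite N_eq /overlap; field; rewrite d0 M0 M1.
rewrite frob2_probvec_dev /rC rmorphD rmorphM fmorph_div /= !rmorph_nat lerD2r.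
by rewrite [X in _ * X]rmorphB rmorph1 fmorphV /= rmorph_nat; exact: dev_sum_le.
Qed.

End POVMBound.

Section SeparableStates.
Variable R : rcfType.
Local Notation C := R[i].

Lemma sum_block_mx m1 m2 n1 n2 K (A : 'I_K -> 'M[C]_(m1, n1))
    (B : 'I_K -> 'M[C]_(m1, n2)) (D1 : 'I_K -> 'M[C]_(m2, n1))
    (D2 : 'I_K -> 'M[C]_(m2, n2)) :
  \sum_i block_mx (A i) (B i) (D1 i) (D2 i) =
  block_mx (\sum_i A i) (\sum_i B i) (\sum_i D1 i) (\sum_i D2 i).
Proof.
elim: K A B D1 D2 => [|K IH] A B D1 D2; first by rewrite !big_ord0 block_mx0.
by rewrite !big_ord_recr /= IH add_block_mx.
Qed.

Lemma mxtrace_tens m n (A : 'M[C]_m) (B : 'M[C]_n) : \tr (A *t B) = \tr A * \tr B.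
Proof. by rewrite /mxtrace mulr_sum; apply: eq_bigr => k _; rewrite /tensmx mxE. Qed.

Lemma ptrA_tens_sum dA dB K (c : 'I_K -> C) (rA : 'I_K -> 'M[C]_dA)
    (rB : 'I_K -> 'M[C]_dB) :
  (forall i, \tr (rA i) = 1) ->
  ptrA (\sum_i c i *: (rA i *t rB i)) = \sum_i c i *: rB i.
Proof.
move=> trA; apply/matrixP => j j'; rewrite mxE summxE.
under eq_bigr => a _ do rewrite summxE.
rewrite exchange_big; apply: eq_bigr => i _.
rewrite mxE -[RHS]mulr1 -(trA i) mulr_sumr; apply: eq_bigr => a _.
by rewrite !mxE !mxtens_indexK mulrA mulrAC.
Qed.

Lemma ptrB_tens_sum dA dB K (c : 'I_K -> C) (rA : 'I_K -> 'M[C]_dA)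
    (rB : 'I_K -> 'M[C]_dB) :
  (forall i, \tr (rB i) = 1) ->
  ptrB (\sum_i c i *: (rA i *t rB i)) = \sum_i c i *: rA i.
Proof.
move=> trB; apply/matrixP => j j'; rewrite mxE summxE.
under eq_bigr => b _ do rewrite summxE.
rewrite exchange_big; apply: eq_bigr => i _.
rewrite mxE -[RHS]mulr1 -(trB i) mulr_sumr; apply: eq_bigr => b _.
by rewrite !mxE !mxtens_indexK mulrA.
Qed.

Lemma probvec_sum d N M (E : 'I_N -> 'I_M -> 'M[C]_d) K (c : 'I_K -> C)
    (s : 'I_K -> 'M[C]_d) :
  probvec E (\sum_i c i *: s i) = \sum_i c i *: probvec E (s i).
Proof.
apply/matrixP => r q; rewrite !mxE summxE mulmx_sumr linear_sum.
by apply: eq_bigr => i _; rewrite !mxE -scalemxAr linearZ.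
Qed.

Lemma Pmat_tens_sum dA dB NA MA NB MB (EA : 'I_NA -> 'I_MA -> 'M[C]_dA)
    (EB : 'I_NB -> 'I_MB -> 'M[C]_dB) K (c : 'I_K -> C)
    (rA : 'I_K -> 'M[C]_dA) (rB : 'I_K -> 'M[C]_dB) :
  Pmat EA EB (\sum_i c i *: (rA i *t rB i)) =
  \sum_i c i *: (probvec EA (rA i) *m (probvec EB (rB i))^T).
Proof.
apply/matrixP => r q; rewrite !mxE summxE mulmx_sumr linear_sum.
apply: eq_bigr => i _; rewrite -scalemxAr linearZ /= tensmx_mul mxtrace_tens !mxE.
by rewrite big_ord1 !mxE.
Qed.

Lemma Mmat_separable l (mu nu : R) dA dB NA MA NB MB
    (EA : 'I_NA -> 'I_MA -> 'M[C]_dA) (EB : 'I_NB -> 'I_MB -> 'M[C]_dB)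
    K (p : 'I_K -> C) (rA : 'I_K -> 'M[C]_dA) (rB : 'I_K -> 'M[C]_dB) :
  \sum_i p i = 1 -> (forall i, \tr (rA i) = 1) -> (forall i, \tr (rB i) = 1) ->
  Mmat l mu nu EA EB (\sum_i p i *: (rA i *t rB i)) =
  \sum_i p i *: (col_mx (rC mu *: const_mx 1) (probvec EA (rA i))
                 *m (col_mx (rC nu *: const_mx 1) (probvec EB (rB i)))^T).
Proof.
move=> p_sum1 trA trB.
rewrite /Mmat ptrA_tens_sum // ptrB_tens_sum // Pmat_tens_sum !probvec_sum.
under [in RHS]eq_bigr => i _ do rewrite tr_col_mx mul_col_row scale_block_mx.
rewrite sum_block_mx; congr block_mx; apply/matrixP => r q; rewrite summxE.
- rewrite (eq_bigr (fun i => p i * (rC mu * rC nu))) => [|i _].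
    by rewrite -mulr_suml p_sum1 mul1r !mxE mulr1 /rC rmorphM.
  by rewrite !mxE big_ord1 !mxE !mulr1.
- rewrite !mxE summxE mulr_sumr; apply: eq_bigr => i _.
  by rewrite !mxE big_ord1 !mxE mulr1 mulrCA.
- rewrite !mxE summxE mulr_sumr; apply: eq_bigr => i _.
  by rewrite !mxE big_ord1 !mxE mulr1 mulrCA (mulrC (rC nu)).
Qed.

End SeparableStates.

Lemma rC_sqrt_sqr (R : rcfType) (a b : R) : 0 <= a -> 0 <= b ->
  rC (Num.sqrt (a * b)) ^+ 2 = rC a * rC b.
Proof.
by move=> a0 b0; rewrite /rC -rmorphXn sqr_sqrtr ?mulr_ge0 //; exact: rmorphM.
Qed.

Lemma frob2_const_col (R : rcfType) l (z : R) :
  frob2 (rC z *: const_mx 1 : 'cV[R[i]]_l) = rC (l%:R * z ^+ 2).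
Proof.
rewrite frob2_cV (eq_bigr (fun _ => rC (z ^+ 2))); last first.
  by move=> r _; rewrite !mxE mulr1 conjC_rC /rC -rmorphM /= expr2.
by rewrite sumr_const card_ord /rC -rmorphMn /= mulr_natl.
Qed.

Lemma frob2_probvec_col_le (R : rcfType) d N M (x : R)
    (E : 'I_N -> 'I_M -> 'M[R[i]]_d) (s : 'M[R[i]]_d) l (z : R) :
  IC_NMPOVM x E -> density s ->
  frob2 (col_mx (rC z *: const_mx 1 : 'cV[R[i]]_l) (probvec E s)) <=
  rC (l%:R * z ^+ 2 + (d%:R - 1) * (d%:R ^+ 2 + M%:R ^+ 2 * x)
                        / (d%:R * M%:R * (M%:R - 1))).
Proof.
move=> [povmE IC] s_density.
rewrite frob2_col_mx frob2_const_col {2}/rC rmorphD lerD2l.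
exact: frob2_probvec_le.
Qed.

Theorem theorem1 (R : rcfType) (dA dB NA MA NB MB : nat) (xA xB : R)
  (EA : 'I_NA -> 'I_MA -> 'M[R[i]]_dA) (EB : 'I_NB -> 'I_MB -> 'M[R[i]]_dB)
  (mu nu : R) (l : nat) (rho : 'M[R[i]]_(dA * dB)) :
  IC_NMPOVM xA EA -> IC_NMPOVM xB EB -> (0 < l)%N ->
  density rho -> separable rho ->
  trnorm (Mmat l mu nu EA EB rho) <=
  rC (Num.sqrt
    ((l%:R * mu ^+ 2 + (dA%:R - 1) * (dA%:R ^+ 2 + MA%:R ^+ 2 * xA)
                         / (dA%:R * MA%:R * (MA%:R - 1)))
   * (l%:R * nu ^+ 2 + (dB%:R - 1) * (dB%:R ^+ 2 + MB%:R ^+ 2 * xB)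
                         / (dB%:R * MB%:R * (MB%:R - 1))))).
Proof.
move=> ICA ICB _ _ [K [p [rA [rB [p_ge0 p_sum1 rA_state rB_state ->]]]]].
have trA i : \tr (rA i) = 1 by case: (rA_state i).
have trB i : \tr (rB i) = 1 by case: (rB_state i).
have pC_sum1 : \sum_i rC (p i) = 1 by rewrite /rC -rmorph_sum p_sum1.
rewrite Mmat_separable //; apply: trnorm_le_convex_rank1; last reflexivity.
- by move=> i; rewrite /rC ler0c.
- exact: pC_sum1.
- by rewrite /rC ler0c sqrtr_ge0.
move=> i /=; have uA := frob2_probvec_col_le l mu ICA (rA_state i).
have uB := frob2_probvec_col_le l nu ICB (rB_state i).
move: (le_trans (frob2_ge0 _) uA) (le_trans (frob2_ge0 _) uB).
rewrite /rC !ler0c => bA_ge0 bB_ge0.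
by rewrite rC_sqrt_sqr //; apply: ler_pM; rewrite ?frob2_ge0.
Qed.
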